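(* Let $q$ be a prime power and let $n,k,r$ be integers with $4\le k\le\frac{n-1}{2}$, $n\le q$, and $2\le r\le k-2$; set $h=(k-1)+r$ and assume $h\le q-2$. Let $\alpha_1,\dots,\alpha_n\in\mathbb{F}_q$ be pairwise distinct and let $C_{h,k}$ be the linear code generated by the $k\times n$ matrix whose rows are $(\alpha_1^{e},\dots,\alpha_n^{e})$ for $e=0,1,\dots,k-2$ and $e=h$. If $C_{h,k}$ is MDS, then $C_{h,k}$ is a non-GRS MDS code.
   Context: Convention: $0^0=1$. A linear code is MDS if its parameters $[n,k,d]$ satisfy $d=n-k+1$. For pairwise distinct $a_1,\dots,a_n\in\mathbb{F}_q$ and $w\in(\mathbb{F}_q^* )^n$, $GRS(n,k,\{a_i\},w)=\{(w_1f(a_1),\dots,w_nf(a_n)) : f\in\mathbb{F}_q[x],\ \deg f\le k-1\}$. Two codes are (monomially) equivalent if one is obtained from the other by permuting coordinates and scaling coordinates by nonzero scalars. A non-GRS MDS code is an MDS code not equivalent to any GRS code. *)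

From HB Require Import structures.
From mathcomp Require Import all_boot all_order all_algebra all_fingroup.
Set Implicit Arguments. Unset Strict Implicit. Unset Printing Implicit Defensive.
Import GRing.Theory.
Local Open Scope ring_scope.

Section Codes.
Variable F : finFieldType.

Definition code (n : nat) := 'rV[F]_n -> Prop.

Definition gen_code (m n : nat) (G : 'M[F]_(m, n)) : code n :=
  fun v => (v <= G)%MS.

Definition wt (n : nat) (v : 'rV[F]_n) : nat := #|[set i : 'I_n | v 0 i != 0]|.

(* Minimum distance of the code generated by G (minimum weight of a nonzero
   codeword; n.+1 if the code is zero). *)
Definition mindist (m n : nat) (G : 'M[F]_(m, n)) : nat :=
  \big[minn/n.+1]_(v : 'rV[F]_n | (v <= G)%MS && (v != 0)) wt v.

Definition is_MDS (m n : nat) (G : 'M[F]_(m, n)) : Prop :=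
  (0 < \rank G)%N /\ mindist G = (n - \rank G + 1)%N.

Definition GRS (n k : nat) (a w : 'I_n -> F) : code n :=
  fun v => exists f : {poly F}, (size f <= k)%N /\ v = \row_j (w j * f.[a j]).

Definition mon_equiv (n : nat) (C1 C2 : code n) : Prop :=
  exists (s : 'S_n) (u : 'I_n -> F), (forall i, u i != 0) /\
    forall v, C1 v <-> C2 (\row_i (u i * v 0 (s i))).

Definition is_GRS_equiv (n : nat) (C : code n) : Prop :=
  exists (k : nat) (a w : 'I_n -> F), injective a /\ (forall i, w i != 0) /\
    mon_equiv C (GRS k a w).

Definition Chk_gen (n k h : nat) (alpha : 'I_n -> F) : 'M[F]_(k, n) :=
  \matrix_(i < k, j < n) alpha j ^+ (if (i < k.-1)%N then (i : nat) else h).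

End Codes.

(* If C = C_{h,k} were monomially equivalent to a GRS code of dimension k',
   then on one hand C would contain min(k', n) linearly independent vectors
   (the images of 1, x, ..., x^(k'-1)), so k' <= k.  On the other hand the
   coordinatewise products of codewords of a GRS code of dimension k' lie in a
   GRS code of dimension 2k' - 1, whereas the products of the rows x^e1 and
   x^e2 of C, with e1, e2 in {0, ..., k-2, h}, realise every exponent e < 2k
   because k + 1 <= h <= 2k - 3; as 2k <= n these 2k Vandermonde rows are
   independent, so 2k <= 2k' - 1. *)

From HB Require Import structures.
From mathcomp Require Import all_boot all_order all_algebra all_fingroup.
From mathcomp Require Import zify.
Set Implicit Arguments. Unset Strict Implicit. Unset Printing Implicit Defensive.
Import GRing.Theory.

Local Open Scope ring_scope.

Definition GRS_gen (F : fieldType) (N n : nat) (a w : 'I_n -> F) : 'M[F]_(N, n) :=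
  \matrix_(j < N, i < n) (w i * a i ^+ j).

Section GRSGenerator.
Variables (F : fieldType) (n : nat) (a w : 'I_n -> F).

Lemma poly_rV_mul_GRS_gen N (p : {poly F}) : (size p <= N)%N ->
  poly_rV p *m GRS_gen N a w = \row_i (w i * p.[a i]).
Proof.
move=> sp; apply/rowP => i; rewrite !mxE (horner_coef_wide _ sp) mulr_sumr.
by apply: eq_bigr => j _; rewrite !mxE mulrCA.
Qed.

Lemma row_free_GRS_gen N : (N <= n)%N -> injective a -> (forall i, w i != 0) ->
  row_free (GRS_gen N a w).
Proof.
move=> le_N_n a_inj w_neq0; apply: inj_row_free => v vG0.
have size_v : (size (rVpoly v) <= N)%N := size_poly _ _.
have root_v i : root (rVpoly v) (a i).
  have := congr1 (fun A : 'rV_n => A 0 i) (poly_rV_mul_GRS_gen size_v).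
  rewrite /= rVpolyK vG0 !mxE => /esym/eqP.
  by rewrite mulf_eq0 (negbTE (w_neq0 i)).
have v0 : rVpoly v = 0.
  apply: (@roots_geq_poly_eq0 _ _ [seq a i | i <- enum 'I_n]).
  - by apply/allP => _ /mapP[i _ ->].
  - by rewrite map_inj_uniq ?enum_uniq.
  - by rewrite size_map size_enum_ord (leq_trans size_v).
by rewrite -[v]rVpolyK v0 linear0.
Qed.

End GRSGenerator.

Section GRSCode.
Variables (F : finFieldType) (n : nat) (a : 'I_n -> F).

Lemma GRS_sub_gen N w v : GRS N a w v -> (v <= GRS_gen N a w)%MS.
Proof. by case=> p [sp ->]; rewrite -(poly_rV_mul_GRS_gen a w sp) submxMl. Qed.

Lemma GRS_schur_sub k1 k2 w v1 v2 : GRS k1 a w v1 -> GRS k2 a w v2 ->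
  (\row_i (v1 0 i * v2 0 i)%R <= GRS_gen (k1 + k2).-1 a (fun i => w i ^+ 2))%MS.
Proof.
case=> [f1 [sf1 ->]] [f2 [sf2 ->]]; apply: GRS_sub_gen; exists (f1 * f2); split.
  by rewrite (leq_trans (size_polyMleq _ _)) // -!subn1 leq_sub2r // leq_add.
by apply/rowP => i; rewrite !mxE hornerM expr2 mulrACA.
Qed.

End GRSCode.

Section GRSEquivalentCode.
Variables (F : finFieldType) (m n k : nat) (G : 'M[F]_(m, n)).
Variables (a w u : 'I_n -> F) (s : 'S_n).
Hypotheses (a_inj : injective a) (w_neq0 : forall i, w i != 0)
           (u_neq0 : forall i, u i != 0).
Hypothesis G_GRS : forall v, gen_code G v <-> GRS k a w (\row_i (u i * v 0 (s i))).

Lemma GRS_equiv_rank_ge N : (N <= k)%N -> (N <= n)%N -> (N <= \rank G)%N.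
Proof.
move=> le_N_k le_N_n.
pose t i := (s^-1)%g i.
pose M := GRS_gen N (a \o t) (fun i => w (t i) / u (t i)).
have free_M : row_free M.
  apply: row_free_GRS_gen => //; first exact: inj_comp a_inj (@perm_inj _ _).
  by move=> i; rewrite mulf_neq0 ?invr_eq0.
have M_sub : (M <= G)%MS.
  apply/row_subP => j; apply/G_GRS; exists 'X^j; split.
    by rewrite size_polyXn (leq_trans (ltn_ord j)).
  apply/rowP => i; rewrite !mxE /t /= (permK s) hornerXn mulrA [u i * _]mulrC divfK //.
by rewrite -(eqP free_M) mxrankS.
Qed.

Lemma GRS_equiv_schur_sub (v1 v2 : 'rV_n) : (v1 <= G)%MS -> (v2 <= G)%MS ->
  (\row_i (u i ^+ 2 * (v1 0 (s i) * v2 0 (s i)))%R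
     <= GRS_gen (k + k).-1 a (fun i => w i ^+ 2))%MS.
Proof.
move=> /G_GRS C1 /G_GRS C2; have := GRS_schur_sub C1 C2.
congr (_ <= _)%MS; apply/rowP => i; rewrite !mxE.
by rewrite expr2 mulrACA.
Qed.

End GRSEquivalentCode.

Lemma monomial_sub_Chk_gen (F : finFieldType) n k h (alpha : 'I_n -> F) e :
  (e < k.-1)%N \/ e = h -> (0 < k)%N ->
  (\row_j alpha j ^+ e <= Chk_gen k h alpha)%MS.
Proof.
move=> e_exp k_gt0.
have [i ->] : exists i : 'I_k, \row_j alpha j ^+ e = row i (Chk_gen k h alpha).
  case: e_exp => [e_lt | ->].
  - have e_lt_k : (e < k)%N by lia.
    by exists (Ordinal e_lt_k); apply/rowP => j; rewrite !mxE /= e_lt.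
  - have k1_lt_k : (k.-1 < k)%N by lia.
    by exists (Ordinal k1_lt_k); apply/rowP => j; rewrite !mxE /= ltnn.
exact: row_sub.
Qed.

Lemma Chk_exponent_split k h e : (k.+1 <= h <= 2 * k - 3)%N -> (e < 2 * k)%N ->
  exists e1 e2, [/\ e = (e1 + e2)%N, (e1 < k.-1)%N \/ e1 = h
                                   & (e2 < k.-1)%N \/ e2 = h].
Proof.
move=> /andP[h_gt h_le] e_lt; case: (leqP e (2 * k - 4)) => e_le.
- by exists (minn e (k - 2)), (e - minn e (k - 2))%N; split; [lia | left; lia | left; lia].
- by exists h, (e - h)%N; split; [lia | right | left; lia].
Qed.

Lemma Chk_gen_GRS_equiv_dim_gt (F : finFieldType) n k h (alpha : 'I_n -> F)
    k' (a w u : 'I_n -> F) (s : 'S_n) :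
  (k.+1 <= h <= 2 * k - 3)%N -> (2 * k <= n)%N -> injective alpha ->
  (forall i, u i != 0) ->
  (forall v, gen_code (Chk_gen k h alpha) v <->
     GRS k' a w (\row_i (u i * v 0 (s i)))) ->
  (k < k')%N.
Proof.
move=> h_range le_2k_n alpha_inj u_neq0 G_GRS.
have squares_sub : (GRS_gen (2 * k) (alpha \o s) (fun i => u i ^+ 2)
                      <= GRS_gen (k' + k').-1 a (fun i => w i ^+ 2))%MS.
  apply/row_subP => e.
  have [e1 [e2 [e_split he1 he2]]] := Chk_exponent_split h_range (ltn_ord e).
  have k_gt0 : (0 < k)%N by lia.
  have := GRS_equiv_schur_sub G_GRS (monomial_sub_Chk_gen alpha he1 k_gt0)
                                    (monomial_sub_Chk_gen alpha he2 k_gt0).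
  by congr (_ <= _)%MS; apply/rowP => i; rewrite !mxE e_split exprD.
have free_squares : row_free (GRS_gen (2 * k) (alpha \o s) (fun i => u i ^+ 2)).
  apply: row_free_GRS_gen => //; first exact: inj_comp alpha_inj (@perm_inj _ _).
  by move=> i; rewrite expf_neq0.
have := mxrankS squares_sub; rewrite (eqP free_squares).
by have := rank_leq_row (GRS_gen (k' + k').-1 a (fun i => w i ^+ 2)); lia.
Qed.

Theorem theorem4p4 (F : finFieldType) (n k r : nat) (alpha : 'I_n -> F) :
  (4 <= k)%N -> (2 * k <= n - 1)%N -> (n <= #|F|)%N ->
  (2 <= r)%N -> (r <= k - 2)%N -> ((k - 1) + r <= #|F| - 2)%N ->
  injective alpha ->
  is_MDS (Chk_gen k ((k - 1) + r) alpha) ->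
  is_MDS (Chk_gen k ((k - 1) + r) alpha) /\
  ~ is_GRS_equiv (gen_code (Chk_gen k ((k - 1) + r) alpha)).
Proof.
move=> k_ge4 two_k_lt_n _ r_ge2 r_le _ alpha_inj MDS; split=> //.
case=> k' [a [w [a_inj [w_neq0 [s [u [u_neq0 G_GRS]]]]]]].
have h_range : (k.+1 <= k - 1 + r <= 2 * k - 3)%N by apply/andP; lia.
have le_2k_n : (2 * k <= n)%N by lia.
have le_k1_n : (k.+1 <= n)%N by lia.
have k_lt_k' := Chk_gen_GRS_equiv_dim_gt h_range le_2k_n alpha_inj u_neq0 G_GRS.
have := GRS_equiv_rank_ge a_inj w_neq0 u_neq0 G_GRS k_lt_k' le_k1_n.
by have := rank_leq_row (Chk_gen k (k - 1 + r) alpha); lia.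
Qed.
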